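(* Let $m$ be a positive integer and let $e$ be an integer with $1\le e\le 3^m-2$. If the monomial $x^e$ is APN or planar over $\mathrm{GF}(3^m)$, then: $e$ is even; $\gcd(e,3^m-1)=2$; $\ell_e=|C_e|=m$; and $e\notin C_1$.
   Context: A function $f:\mathrm{GF}(q)\to\mathrm{GF}(q)$ is almost perfect nonlinear (APN) if $\max_{a\in\mathrm{GF}(q)^*}\max_{b\in\mathrm{GF}(q)}|\{x\in\mathrm{GF}(q): f(x+a)-f(x)=b\}|=2$, and planar (perfect nonlinear) if this maximum equals $1$. For $n=3^m-1$ and $j\in\mathbb{Z}_n$, $C_j=\{j,3j,\dots,3^{\ell_j-1}j\}$ (mod $n$) is the $3$-cyclotomic coset modulo $n$ containing $j$, where $\ell_j$ is the smallest positive integer with $3^{\ell_j}j\equiv j\pmod n$. *)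

From mathcomp Require Import all_boot all_algebra all_field.
Set Implicit Arguments. Unset Strict Implicit. Unset Printing Implicit Defensive.
Import GRing.Theory.
Local Open Scope ring_scope.

Definition ddt_entry (F : finFieldType) (f : F -> F) (a b : F) : nat :=
  #|[set x : F | f (x + a) - f x == b]|.

Definition diff_unif (F : finFieldType) (f : F -> F) : nat :=
  (\max_(a : F | a != 0%R) \max_(b : F) ddt_entry f a b)%N.

Definition APN (F : finFieldType) (f : F -> F) : Prop := diff_unif f = 2%N.
Definition planar (F : finFieldType) (f : F -> F) : Prop := diff_unif f = 1%N.

Local Close Scope ring_scope.

(* ell_j : smallest positive l with 3^l * j = j (mod n).  Such an l <= n
   always exists when n = 3^m - 1 >= 2 (3 is a unit mod n), so searching
   l in 1..n is exact. *)
Definition cyc_ell (n j : nat) : nat :=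
  (find (fun i => (3 ^ i.+1 * j) %% n == j %% n) (iota 0 n)).+1.

Definition cyc_coset (n j : nat) : seq nat :=
  [seq (3 ^ i * j) %% n | i <- iota 0 (cyc_ell n j)].

Definition cyc_coset_card (n j : nat) : nat := size (undup (cyc_coset n j)).

(* In characteristic 3 an odd exponent is excluded because 0, 1 and -1 all
   solve (x + 1)^e - x^e = 1.  Every e-th root of unity y <> 1 yields the
   solution x = 1/(y - 1) of (x + 1)^e = x^e, since x + 1 = x y; the field has
   gcd(e, 3^m - 1) such roots, so this gcd is at most 3, hence 2 as e is even.
   The coset statements then follow from gcd(e, 3^m - 1) = 2: for 0 < k < m,
   3^m - 1 dividing (3^k - 1) e would force (3^m - 1)/2 to divide 3^k - 1,
   which is smaller. *)

From mathcomp Require Import all_boot all_algebra all_field.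
From mathcomp Require Import cyclic zify.
Set Implicit Arguments.
Unset Strict Implicit.
Unset Printing Implicit Defensive.
Import GRing.Theory.

Section DifferentialUniformity.
Variables (F : finFieldType) (f : F -> F).
Local Open Scope ring_scope.

Lemma ddt_entry_le_diff_unif a b : a != 0 -> (ddt_entry f a b <= diff_unif f)%N.
Proof.
move=> a_neq0.
apply: leq_trans (leq_bigmax_cond (F := fun a => \max_(b : F) ddt_entry f a b) a a_neq0).
exact: (leq_bigmax (F := fun b => ddt_entry f a b)).
Qed.

Lemma size_le_ddt_entry a b (s : seq F) : uniq s ->
  (forall x, x \in s -> f (x + a) - f x = b) -> (size s <= ddt_entry f a b)%N.
Proof.
move=> s_uniq s_sol; rewrite /ddt_entry cardE; apply: uniq_leq_size => // x xs.
by rewrite mem_enum inE s_sol.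
Qed.

End DifferentialUniformity.

Section PowerMap.
Variables (F : finFieldType) (e : nat).
Local Open Scope ring_scope.

Lemma ddt_entry_pow_odd : 3%N \in [pchar F] -> odd e ->
  (3 <= ddt_entry (fun x : F => x ^+ e) 1%R 1%R)%N.
Proof.
move=> char3 e_odd.
have two : 1 + 1 = - 1 :> F.
  by apply/eqP; rewrite -subr_eq0 opprK -mulr2n -mulrSr (pcharf0 char3).
have e_gt0 : (0 < e)%N by case: e e_odd.
have e_sign x : (- x) ^+ e = - x ^+ e by rewrite exprNn -signr_odd e_odd mulN1r.
have two_neq0 : 1 + 1 != 0 :> F.
  by rewrite two oppr_eq0 oner_eq0.
apply: (@size_le_ddt_entry _ _ _ _ [:: 0; 1; -1]).
- rewrite /= !inE negb_or eq_sym oner_eq0 eq_sym oppr_eq0 oner_eq0 /=.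
  by rewrite -subr_eq0 opprK two_neq0.
- move=> x; rewrite !inE => /or3P[] /eqP->.
  + by rewrite add0r expr1n expr0n eqn0Ngt e_gt0 subr0.
  + by rewrite two e_sign expr1n -opprD two opprK.
  + by rewrite addNr expr0n eqn0Ngt e_gt0 e_sign expr1n sub0r opprK.
Qed.

Lemma ddt_entry_pow_unity_roots (s : seq F) : uniq s ->
  all (fun y => y ^+ e == 1) s -> ((size s).-1 <= ddt_entry (fun x : F => x ^+ e) 1%R 0%R)%N.
Proof.
move=> s_uniq /allP s_roots.
pose g y : F := (y - 1)^-1.
have g_sol y : y != 1 -> y ^+ e = 1 -> (g y + 1) ^+ e - g y ^+ e = 0.
  move=> y1 ye; have y1_neq0 : y - 1 != 0 by rewrite subr_eq0.
  have -> : g y + 1 = g y * y.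
    by rewrite -[in LHS](mulVf y1_neq0) /g -[X in X + _]mulr1 -mulrDr subrKC.
  by rewrite exprMn ye mulr1 subrr.
have g_inj : {in predC1 1 &, injective g}.
  by move=> y z y1 z1 /invr_inj /addIr.
have uniq_rem : uniq (rem 1 s) by exact: rem_uniq.
have mem_rem y : y \in rem 1 s -> (y != 1) && (y \in s).
  by rewrite (mem_rem_uniq 1 s_uniq) inE.
have size_rem_ge : ((size s).-1 <= size (rem 1%R s))%N.
  by case: (boolP (1 \in s)) => [/size_rem -> | /rem_id ->] //; exact: leq_pred.
apply: leq_trans size_rem_ge _; rewrite -(size_map g).
apply: size_le_ddt_entry.
  rewrite map_inj_in_uniq // => y z /mem_rem/andP[y1 _] /mem_rem/andP[z1 _].
  exact: g_inj.
move=> _ /mapP[y /mem_rem/andP[y1 ys] ->].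
by apply: g_sol y1 _; apply/eqP/s_roots.
Qed.

Lemma finField_prim_root_exists : exists z : F, (#|F|.-1).-primitive_root z.
Proof.
have F_gt1 := finNzRing_gt1 F.
have /hasP[z _ z_prim] : has (#|F|.-1).-primitive_root (enum (predC1 (0 : F))).
  apply: has_prim_root; rewrite ?enum_uniq -?cardE ?cardC1 //.
    by rewrite -ltnS (ltn_predK F_gt1).
  apply/allP => x; rewrite mem_enum inE => x_neq0; rewrite unity_rootE.
  by apply/eqP/(mulIf x_neq0); rewrite mul1r -exprSr (ltn_predK F_gt1) expf_card.
by exists z.
Qed.

Lemma gcdn_pred_le_ddt_entry_pow :
  ((gcdn e #|F|.-1).-1 <= ddt_entry (fun x : F => x ^+ e) 1%R 0%R)%N.
Proof.
set d := gcdn e #|F|.-1; case: (posnP d) => [-> // | d_gt0].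
have [z z_prim] := finField_prim_root_exists.
have w_prim := dvdn_prim_root z_prim (dvdn_gcdr e #|F|.-1).
set w := z ^+ _ in w_prim.
have := @ddt_entry_pow_unity_roots [seq w ^+ i | i <- iota 0 d].
rewrite size_map size_iota; apply.
  rewrite map_inj_in_uniq ?iota_uniq // => i j; rewrite !mem_iota /= => i_lt j_lt.
  by move/eqP; rewrite (eq_prim_root_expr w_prim) !modn_small // => /eqP.
apply/allP => _ /mapP[i _ ->]; rewrite -exprM mulnC exprM.
move: (dvdn_gcdl e #|F|.-1); rewrite -/d (prim_order_dvd w_prim) => /eqP ->.
by rewrite expr1n.
Qed.

End PowerMap.

Lemma pow_diff_unif_le2 (m : nat) (F : finFieldType) (e : nat) :
  0 < m -> #|F| = 3 ^ m -> diff_unif (fun x : F => (x ^+ e)%R) <= 2 ->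
  ~~ odd e /\ gcdn e (3 ^ m - 1) = 2.
Proof.
move=> m_gt0 cardF du_le2.
have char3 : 3 \in [pchar F]%R by apply: card_finPcharP cardF _.
have ddt_le2 b : ddt_entry (fun x : F => (x ^+ e)%R) 1%R b <= 2.
  exact: leq_trans (ddt_entry_le_diff_unif _ b (oner_neq0 F)) du_le2.
have e_even : ~~ odd e.
  by apply/negP => /(ddt_entry_pow_odd char3) /leq_trans /(_ (ddt_le2 1%R)).
split=> //.
have := leq_trans (gcdn_pred_le_ddt_entry_pow F e) (ddt_le2 0%R).
rewrite cardF -[(3 ^ m).-1]subn1; set d := gcdn e _ => d_le3.
have /dvdnP[k d_eq] : 2 %| d.
  by rewrite dvdn_gcd dvdn2 e_even dvdn2 oddB ?expn_gt0 // oddX orbT.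
have d_gt0 : 0 < d by rewrite gcdn_gt0 subn_gt0 (ltn_exp2l 0) // m_gt0 orbT.
lia.
Qed.

Lemma eqn_mod_expn_mul (b n k e : nat) : 0 < b ->
  ((b ^ k * e) %% n == e %% n) = (n %| (b ^ k - 1) * e).
Proof.
by move=> b_gt0; rewrite eqn_mod_dvd ?mulnBl ?mul1n // leq_pmull // expn_gt0 b_gt0.
Qed.

Lemma coprime_expn_subn1 (b m i : nat) : 0 < b -> 0 < m -> coprime (b ^ m - 1) (b ^ i).
Proof.
move=> b_gt0 m_gt0; apply: coprimeXr.
have : coprime (b ^ m - 1) (b ^ m).
  by have := coprimenS (b ^ m - 1); rewrite subn1 prednK ?expn_gt0 ?b_gt0.
by apply: coprime_dvdr; rewrite -(prednK m_gt0) expnS dvdn_mulr.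
Qed.

Lemma find_iota0 (P : pred nat) (n j : nat) : j < n -> P j ->
  (forall i, i < j -> ~~ P i) -> find P (iota 0 n) = j.
Proof.
move=> j_lt_n Pj before_j.
have has_P : has P (iota 0 n) by apply/hasP; exists j; rewrite ?mem_iota.
have := has_find P (iota 0 n); rewrite has_P size_iota => find_lt.
case: (ltngtP (find P (iota 0 n)) j) => // [lt_j | gt_j].
  by have := nth_find 0 has_P; rewrite nth_iota // add0n (negbTE (before_j _ lt_j)).
by have := before_find 0 gt_j; rewrite nth_iota // add0n Pj.
Qed.

Section CyclotomicCoset.
Variables (m e : nat).
Hypotheses (m_gt0 : 0 < m) (gcd_e : gcdn e (3 ^ m - 1) = 2).

Lemma not_dvdn_expn_subn1_mul k : 0 < k < m -> ~~ (3 ^ m - 1 %| (3 ^ k - 1) * e).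
Proof.
move=> /andP[k_gt0 k_lt_m].
have : 3 ^ k.+1 <= 3 ^ m by rewrite leq_exp2l.
have : 3 <= 3 ^ k by rewrite -{1}(expn1 3) leq_exp2l.
rewrite expnS => le_3k le_3km.
have /dvdnP[e' e_eq] : 2 %| e by rewrite -gcd_e dvdn_gcdl.
have /dvdnP[n' n_eq] : 2 %| 3 ^ m - 1 by rewrite -{1}gcd_e dvdn_gcdr.
have coprime_e' : coprime e' n'.
  by move: gcd_e; rewrite e_eq n_eq -muln_gcdl /coprime; lia.
rewrite e_eq n_eq mulnA dvdn_pmul2r // Gauss_dvdl 1?coprime_sym //.
apply/negP => /dvdn_leq; lia.
Qed.

Lemma cyc_ell_eq : cyc_ell (3 ^ m - 1) e = m.
Proof.
rewrite /cyc_ell (@find_iota0 _ _ m.-1) ?prednK //=.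
- by have := ltn_expl m (isT : 1 < 3); lia.
- by rewrite eqn_mod_expn_mul // dvdn_mulr.
- by move=> i i_lt; rewrite eqn_mod_expn_mul // not_dvdn_expn_subn1_mul //; lia.
Qed.

Lemma cyc_coset_card_eq : cyc_coset_card (3 ^ m - 1) e = m.
Proof.
rewrite /cyc_coset_card /cyc_coset cyc_ell_eq undup_id ?size_map ?size_iota //.
rewrite map_inj_in_uniq ?iota_uniq //.
suff mod_inj i j : i < j < m -> (3 ^ i * e) %% (3 ^ m - 1) != (3 ^ j * e) %% (3 ^ m - 1).
  move=> i j; rewrite !mem_iota /= => i_lt j_lt /eqP eq_ij; apply/eqP.
  case: (ltngtP i j) => // ij; move: eq_ij; apply: contraTT => _.
  - by apply: mod_inj; lia.
  - by rewrite eq_sym; apply: mod_inj; lia.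
move=> /andP[i_lt_j j_lt_m]; rewrite -(subnK (ltnW i_lt_j)) expnD -mulnA eq_sym.
rewrite eqn_mod_dvd; last by rewrite leq_pmull ?expn_gt0.
rewrite -{2}(mul1n (3 ^ i * e)) -mulnBl mulnCA Gauss_dvdr ?coprime_expn_subn1 //.
by rewrite not_dvdn_expn_subn1_mul // subn_gt0 i_lt_j; lia.
Qed.

Lemma notin_cyc_coset1 : e \notin cyc_coset (3 ^ m - 1) 1.
Proof.
apply/mapP => -[i _ e_eq]; move: gcd_e.
by rewrite e_eq muln1 gcdn_modl gcdnC (eqP (@coprime_expn_subn1 3 m i isT m_gt0)).
Qed.

End CyclotomicCoset.

Theorem lemma2 (m : nat) (F : finFieldType) (e : nat) :
  0 < m -> #|F| = 3 ^ m -> 1 <= e <= 3 ^ m - 2 ->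
  (APN (fun x : F => (x ^+ e)%R) \/ planar (fun x : F => (x ^+ e)%R)) ->
  [/\ ~~ odd e,
      gcdn e (3 ^ m - 1) = 2,
      cyc_ell (3 ^ m - 1) e = m,
      cyc_coset_card (3 ^ m - 1) e = m
    & e \notin cyc_coset (3 ^ m - 1) 1].
Proof.
move=> m_gt0 cardF _ apn_or_planar.
have du_le2 : diff_unif (fun x : F => (x ^+ e)%R) <= 2.
  by case: apn_or_planar => [-> | ->].
have [e_even gcd_e] := pow_diff_unif_le2 m_gt0 cardF du_le2.
by split; [| | exact: cyc_ell_eq | exact: cyc_coset_card_eq | exact: notin_cyc_coset1].
Qed.
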